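(* Let $\mathcal{A}=\{A_1,\dots,A_m\}$ be a bimodal collection of pairwise disjoint nonempty subsets of a finite abelian group $G$, with internal difference groups $H_1,\dots,H_m$, labelled so that $|A_i|<|H_i|$ exactly for $i=1,\dots,r$, where $r\ge2$. Let $D=(a_1+H_1)\setminus A_1$, where $a_1+H_1$ is the coset of $H_1$ containing $A_1$, and suppose $\mathcal{A}$ is in canonical position, i.e. $D$ is a subgroup of $G$. Then for every $i\ge r+1$, $H_i$ is a subgroup of $D$.
   Context: $G$ is written additively. The internal difference group $H_i$ of $A_i$ is the subgroup generated by all $x-y$ with $x,y\in A_i$; $A_i$ lies in a single coset of $H_i$ and $|A_i|\le|H_i|$. A collection $\{A_1,\dots,A_m\}$ of pairwise disjoint subsets of $G$ is bimodal if for every $i$ and every $\delta\in G\setminus\{0\}$, the number $N_i(\delta)$ of pairs $(a,b)$ with $a\in A_i$, $b\in A_j$ for some $j\neq i$, and $a-b=\delta$, satisfies $N_i(\delta)\in\{0,|A_i|\}$. (For such collections with $r\ge2$ the set $D$ equals $(a_i+H_i)\setminus A_i$ for every $i\le r$ and is a coset of a subgroup; canonical position means the collection has been translated so that $D$ is a subgroup.) *)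

From mathcomp Require Import all_boot all_order all_algebra.
Set Implicit Arguments. Unset Strict Implicit. Unset Printing Implicit Defensive.
Import GRing.Theory.
Local Open Scope ring_scope.

Definition is_subgroup (G : finZmodType) (K : {set G}) : bool :=
  (0 \in K) && [forall x in K, forall y in K, x - y \in K].

Definition diffs (G : finZmodType) (A : {set G}) : {set G} :=
  [set x - y | x in A, y in A].

Definition idg (G : finZmodType) (A : {set G}) : {set G} :=
  \bigcap_(K : {set G} | is_subgroup K && (diffs A \subset K)) K.

(* N_i(delta): the number of pairs (a,b), a in A_i, b in A_j for some j <> i
   (j < m), with a - b = delta.  The collection is A 0, ..., A (m-1). *)
Definition Ncount (G : finZmodType) (m : nat) (A : nat -> {set G}) (i : nat)
    (delta : G) : nat :=
  #|[set ab : G * G | [&& ab.1 \in A i,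
       [exists j : 'I_m, (val j != i) && (ab.2 \in A j)] &
       ab.1 - ab.2 == delta]]|.

Definition bimodal (G : finZmodType) (m : nat) (A : nat -> {set G}) : Prop :=
  forall i, (i < m)%N -> forall delta : G, delta != 0 ->
    Ncount m A i delta = 0%N \/ Ncount m A i delta = #|A i|.

Definition coset_add (G : finZmodType) (a : G) (H : {set G}) : {set G} :=
  [set a + h | h in H].

From mathcomp Require Import all_boot all_order all_algebra.
Set Implicit Arguments.
Unset Strict Implicit.
Unset Printing Implicit Defensive.
Local Open Scope ring_scope.
Import GRing.Theory.

(* For i >= r the set A_i is a full coset of H_i.  Bimodality makes the union
   of the other blocks H_j-periodic for every j, so the union U of all blocks
   is invariant under H_i.  Canonical position puts 0 outside U and A_1 inside
   H_1; then a translate a + h (a in A_1, h in H_i) leaving A_1 would lie in the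
   other blocks, and periodicity would move it back to h and then to 0 in U.
   Hence H_i stabilizes A_1, which forces H_i into H_1 \ A_1 = D. *)

Section Subgroups.
Variable G : finZmodType.
Implicit Types (A K : {set G}) (a g h x y : G).

Lemma subgroup0 K : is_subgroup K -> 0 \in K.
Proof. by case/andP. Qed.

Lemma subgroupB K x y : is_subgroup K -> x \in K -> y \in K -> x - y \in K.
Proof.
by case/andP=> _ /forall_inP sK xK yK; move/forall_inP: (sK x xK); apply.
Qed.

Lemma subgroupN K y : is_subgroup K -> y \in K -> - y \in K.
Proof. by move=> sK yK; rewrite -sub0r subgroupB // subgroup0. Qed.

Lemma subgroupD K x y : is_subgroup K -> x \in K -> y \in K -> x + y \in K.
Proof. by move=> sK xK yK; rewrite -(opprK y) subgroupB // subgroupN. Qed.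

Lemma idg_min A K : is_subgroup K -> diffs A \subset K -> idg A \subset K.
Proof. by move=> sK dK; apply: bigcap_inf; rewrite sK dK. Qed.

Lemma idgB A x y : x \in A -> y \in A -> x - y \in idg A.
Proof.
move=> xA yA; apply/bigcapP => K /andP [_ /subsetP]; apply.
by apply/imset2P; exists x y.
Qed.

Lemma subgroup_idg A : is_subgroup (idg A).
Proof.
apply/andP; split; first by apply/bigcapP => K /andP [sK _]; exact: subgroup0.
apply/forall_inP => x /bigcapP xH; apply/forall_inP => y /bigcapP yH.
apply/bigcapP => K dK; have /andP [sK _] := dK.
by apply: subgroupB; [exact: sK | exact: xH | exact: yH].
Qed.

Lemma sub_idg A a : a \in A -> a \in idg A -> A \subset idg A.
Proof.
move=> aA aH; apply/subsetP => x xA; rewrite -(subrK a x).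
exact: subgroupD (subgroup_idg A) (idgB xA aA) aH.
Qed.

Lemma coset_add0 K a : is_subgroup K -> 0 \in coset_add a K -> a \in K.
Proof.
move=> sK /imsetP [g gK /eqP]; rewrite eq_sym addr_eq0 => /eqP ->.
exact: subgroupN.
Qed.

Lemma coset_add_id K a : is_subgroup K -> a \in K -> coset_add a K = K.
Proof.
move=> sK aK; apply/setP => x; rewrite /coset_add.
apply/imsetP/idP => [[g gK ->]|xK]; first exact: subgroupD.
by exists (x - a); [exact: subgroupB | rewrite subrKC].
Qed.

Lemma addr_idg_full A y h :
  (#|idg A| <= #|A|)%N -> y \in A -> h \in idg A -> y + h \in A.
Proof.
move=> full yA hH.
have SH : [set x - y | x in A] \subset idg A.
  by apply/subsetP => _ /imsetP [x xA ->]; exact: idgB.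
have /eqP SE : [set x - y | x in A] == idg A.
  by rewrite eqEcard SH card_imset //; exact: addIr.
by move: hH; rewrite -SE => /imsetP [x xA ->]; rewrite subrKC.
Qed.

Lemma idg_periodic A (P : {set G}) :
  (forall a a' x, a \in A -> a' \in A -> x \in P -> x + (a' - a) \in P) ->
  forall g x, g \in idg A -> (x + g \in P) = (x \in P).
Proof.
move=> shiftP.
set K := [set g | [forall x, (x + g \in P) == (x \in P)]].
have sK : is_subgroup K.
  apply/andP; split; first by rewrite inE; apply/forallP => x; rewrite addr0.
  apply/forall_inP => u; rewrite inE => /forallP uK.
  apply/forall_inP => v; rewrite inE => /forallP vK.
  rewrite inE; apply/forallP => x.
  by rewrite -(eqP (vK (x + (u - v)))) addrA subrK (eqP (uK x)).
have dK : diffs A \subset K.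
  apply/subsetP => _ /imset2P [a' a a'A aA ->]; rewrite inE.
  apply/forallP => x; apply/eqP; apply/idP/idP; last exact: shiftP.
  by move/(shiftP a' a _ a'A aA); rewrite -(opprB a' a) addrK.
by move=> g x /(subsetP (idg_min sK dK)); rewrite inE => /forallP/(_ x)/eqP.
Qed.

End Subgroups.

Section Bimodal.
Variables (G : finZmodType) (m : nat) (A : nat -> {set G}).
Hypothesis disjA :
  forall i j, (i < m)%N -> (j < m)%N -> i <> j -> [disjoint A i & A j].
Hypothesis bimA : bimodal m A.

Definition others (j : nat) : {set G} := \bigcup_(k < m | val k != j) A k.

Definition covered : {set G} := \bigcup_(k < m) A k.

Lemma Ncount_others j delta :
  Ncount m A j delta = #|[set a in A j | a - delta \in others j]|.
Proof.
have inj : injective (fun a : G => (a, a - delta)) by move=> a b [].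
rewrite /Ncount -(card_imset _ inj).
apply: eq_card => -[x y]; rewrite [in LHS]inE /=; apply/idP/imsetP.
  case/and3P => xA /existsP [k kj] /eqP <-; exists x; last by rewrite subKr.
  by rewrite inE xA subKr; apply/bigcupP; exists k; case/andP: kj.
case=> a; rewrite inE => /andP [aA /bigcupP [k kj ak]] [-> ->].
by rewrite aA subKr eqxx andbT; apply/existsP; exists k; rewrite kj.
Qed.

Lemma others_disjoint j x : (j < m)%N -> x \in others j -> x \notin A j.
Proof.
move=> jm /bigcupP [k kj xk]; have kj' : val k <> j by apply/eqP.
by rewrite (disjointFr (disjA (ltn_ord k) jm kj') xk).
Qed.

Lemma coveredE j x :
  (j < m)%N -> (x \in covered) = (x \in A j) || (x \in others j).
Proof.
move=> jm; apply/bigcupP/orP => [[k _ xk]|].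
  case: (eqVneq (val k) j) => [<-|kj]; first by left.
  by right; apply/bigcupP; exists k.
by case=> [xj|/bigcupP [k _ xk]]; [exists (Ordinal jm) | exists k].
Qed.

Lemma bimodal_others_shift j delta a a' :
  (j < m)%N -> delta != 0 -> a \in A j -> a - delta \in others j ->
  a' \in A j -> a' - delta \in others j.
Proof.
move=> jm delta0 aA aO a'A.
set S := [set a in A j | a - delta \in others j].
have SA : S \subset A j by apply/subsetP => x; rewrite inE => /andP [].
have : (0 < #|S|)%N by apply/card_gt0P; exists a; rewrite inE aA.
have := bimA jm delta0; rewrite Ncount_others -/S => -[-> //|cardS _].
have /eqP SE : S == A j by rewrite eqEcard SA cardS leqnn.
by move: a'A; rewrite -SE inE => /andP [].
Qed.

Lemma others_periodic j g x :
  (j < m)%N -> g \in idg (A j) -> (x + g \in others j) = (x \in others j).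
Proof.
move=> jm; apply: idg_periodic => a a' y aA a'A yO.
have delta0 : a - y != 0.
  by rewrite subr_eq0; apply: contraTneq aA => ->; exact: others_disjoint.
have := bimodal_others_shift jm delta0 aA; rewrite subKr => /(_ a' yO a'A).
by rewrite opprB addrCA.
Qed.

Lemma covered_addr_idg i y h :
  (i < m)%N -> (#|idg (A i)| <= #|A i|)%N -> h \in idg (A i) ->
  y \in covered -> y + h \in covered.
Proof.
move=> im full hH; rewrite !(coveredE _ im) => /orP [yA|yO].
  by rewrite addr_idg_full.
by rewrite others_periodic // yO orbT.
Qed.

Lemma not_covered0 j a :
  (j < m)%N -> a \in A j -> a \in idg (A j) -> 0 \notin A j -> 0 \notin covered.
Proof.
move=> jm aA aH nA0; rewrite (coveredE _ jm) (negbTE nA0) /=.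
rewrite -(others_periodic 0 jm aH) add0r.
exact: contraL (others_disjoint jm) aA.
Qed.

Lemma addr_idg_full_stable j i a h :
  (j < m)%N -> (i < m)%N -> A j \subset idg (A j) -> 0 \notin covered ->
  (#|idg (A i)| <= #|A i|)%N -> h \in idg (A i) -> a \in A j -> a + h \in A j.
Proof.
move=> jm im AjH n0 full hH aA; apply: contraNT n0 => ahA.
have ahO : a + h \in others j.
  have : a + h \in covered.
    by apply: (covered_addr_idg im full hH); rewrite (coveredE _ jm) aA.
  by rewrite (coveredE _ jm) (negbTE ahA).
have hO : h \in others j.
  have naH : - a \in idg (A j) by rewrite subgroupN ?subgroup_idg ?(subsetP AjH).
  by move: ahO; rewrite -(others_periodic _ jm naH) addrC addKr.
have nhH : - h \in idg (A i) by rewrite subgroupN ?subgroup_idg.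
rewrite -(subrr h); apply: (covered_addr_idg im full nhH).
by rewrite (coveredE _ jm) hO orbT.
Qed.

End Bimodal.

Theorem proposition3p8 (G : finZmodType) (m r : nat) (A : nat -> {set G}) :
  (* pairwise disjoint, nonempty *)
  (forall i j, (i < m)%N -> (j < m)%N -> i <> j -> [disjoint A i & A j]) ->
  (forall i, (i < m)%N -> A i != set0) ->
  bimodal m A ->
  (* |A_i| < |H_i| exactly for the first r indices 0, ..., r-1 *)
  (2 <= r)%N -> (r <= m)%N ->
  (forall i, (i < m)%N -> (#|A i| < #|idg (A i)|)%N = (i < r)%N) ->
  (* canonical position: D = (a_1 + H_1) \ A_1 is a subgroup *)
  forall a1 : G, a1 \in A 0%N ->
  is_subgroup (coset_add a1 (idg (A 0%N)) :\: A 0%N) ->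
  forall i, (r <= i < m)%N ->
    idg (A i) \subset (coset_add a1 (idg (A 0%N)) :\: A 0%N).
Proof.
move=> disjA _ bimA _ _ small a1 a1A sD i /andP [ri im].
have m0 : (0 < m)%N by apply: leq_ltn_trans im.
have /setDP [c0 nA0] := subgroup0 sD.
have a1H : a1 \in idg (A 0%N) := coset_add0 (subgroup_idg _) c0.
have full : (#|idg (A i)| <= #|A i|)%N by rewrite leqNgt small // ltnNge ri.
have n0 := not_covered0 disjA bimA m0 a1A a1H nA0.
have stable a h (hH : h \in idg (A i)) (aA : a \in A 0%N) : a + h \in A 0%N.
  exact: (addr_idg_full_stable disjA bimA m0 im (sub_idg a1A a1H) n0 full hH aA).
rewrite coset_add_id ?subgroup_idg //; apply/subsetP => h hH; apply/setDP; split.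
  by have := idgB (stable _ _ hH a1A) a1A; rewrite [a1 + h]addrC addrK.
apply: contra nA0 => hA.
by have := stable _ _ (subgroupN (subgroup_idg _) hH) hA; rewrite subrr.
Qed.
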